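(* Let $f^*:[0,1]\to\mathbb{R}$ be any function, let $S=\{(x_i,y_i)\}_{i=1}^n$ with $0<x_1<x_2<\dots<x_n<1$, and let $\hat f_S$ be the minimum-norm interpolating two-layer ReLU network for $S$ (defined in the context). Then for any $i\in\{2,\dots,n-2\}$ and $x\in[x_i,x_{i+1})$, \[ |\hat f_S(x)-f^*(x)|\le\max\left\{|g_i(x)-f^*(x)|,\ \min\{|g_{i+1}(x)-f^*(x)|,|g_{i-1}(x)-f^*(x)|\}\right\}; \] for $x\in[0,x_2)$, $|\hat f_S(x)-f^*(x)|=|g_1(x)-f^*(x)|$; and for $x\in[x_{n-1},1]$, $|\hat f_S(x)-f^*(x)|=|g_{n-1}(x)-f^*(x)|$.
   Context: A two-layer ReLU network with skip connection is $f_{\theta,a_0,b_0}(x)=\sum_{j=1}^m a_j(w_jx+b_j)_++a_0x+b_0$ with $\theta=\{a_j,w_j,b_j\}_{j=1}^m\in\mathbb{R}^{3m}$ and arbitrary width $m$. The min-norm interpolator $\hat f_S$ is the (unique) minimizer of $\|\theta\|_2^2$ over all $m,\theta,a_0,b_0$ subject to $f_{\theta,a_0,b_0}(x_i)=y_i$ for all $i\in[n]$ (the weights $a_0,b_0$ are not penalized). For $i\in[n-1]$, $g_i$ denotes the affine function through $(x_i,y_i)$ and $(x_{i+1},y_{i+1})$. *)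

From Stdlib Require Import Reals Lra List.
Open Scope R_scope.

Definition relu (z : R) : R := Rmax 0 z.

(* A two-layer ReLU network with skip connection.  The hidden layer is a list
   of neurons (a_j, w_j, b_j); its length is the (arbitrary) width m. *)
Definition neurons := list (R * R * R).

Definition net (th : neurons) (a0 b0 : R) (x : R) : R :=
  fold_right (fun (p : R * R * R) acc =>
                let '(a, w, b) := p in a * relu (w * x + b) + acc) 0 th
  + a0 * x + b0.

Definition sqnorm (th : neurons) : R :=
  fold_right (fun (p : R * R * R) acc =>
                let '(a, w, b) := p in a ^ 2 + w ^ 2 + b ^ 2 + acc) 0 th.

Definition interpolates (n : nat) (xs ys : nat -> R) (th : neurons) (a0 b0 : R) : Prop :=
  forall i : nat, (1 <= i <= n)%nat -> net th a0 b0 (xs i) = ys i.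

Definition min_norm_interpolant (n : nat) (xs ys : nat -> R)
  (th : neurons) (a0 b0 : R) : Prop :=
  interpolates n xs ys th a0 b0 /\
  forall (th' : neurons) (a0' b0' : R),
    interpolates n xs ys th' a0' b0' -> sqnorm th <= sqnorm th'.

Definition gseg (xs ys : nat -> R) (i : nat) (x : R) : R :=
  ys i + (ys (S i) - ys i) / (xs (S i) - xs i) * (x - xs i).

From Stdlib Require Import Reals Lra Lia Psatz List Classical.
Open Scope R_scope.

(* Write a neuron a relu(w x + b) with w <> 0 as c relu(x - t) plus an affine function, which
   the free skip connection absorbs (t = -b/w).  By AM-GM the cheapest neuron realising
   c relu(x - t) costs 2 |c| sqrt(1 + t^2), so the min-norm interpolant is an interpolating sum
   of hinges minimising sum |c| sqrt(1 + t^2).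
   Exchange arguments, certified by affine functions p + q t dominated by d sqrt(1 + t^2) on
   the kinks, show that at such an optimum no kink lies outside [x_2, x_{n-1}], that a gap
   (x_j, x_{j+1}) containing a kink carries a single kink location and none at its ends, and
   that kinks in adjacent gaps bend the same way.  Hence f is affine on [0, x_2] and on
   [x_{n-1}, 1], and a piece [x_i, x_{i+1}] with a kink lies in a stretch [x_{i-1}, x_{i+2}]
   on which f is convex or concave: there f lies on one side of the chord g_i and on the other
   side of both secants g_{i-1} and g_{i+1}, which is the claimed bound. *)

(** * The cost of a kink *)

Definition wt (t : R) : R := sqrt (1 + t * t).

Lemma wt_pos t : 0 < wt t.
Proof. apply sqrt_lt_R0; nra. Qed.

Lemma wt_sq t : wt t * wt t = 1 + t * t.
Proof. apply sqrt_sqrt; nra. Qed.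

Lemma wt_gt t : t < wt t.
Proof. pose proof (wt_pos t); pose proof (wt_sq t); nra. Qed.

Lemma wt_mono s t : 0 <= s -> s <= t -> wt s <= wt t.
Proof. intros; apply sqrt_le_1_alt; nra. Qed.

Lemma wt_lipschitz s t : s <= t -> wt t <= wt s + (t - s).
Proof.
  intros Hst.
  pose proof (wt_pos s); pose proof (wt_pos t); pose proof (wt_sq s); pose proof (wt_sq t).
  pose proof (wt_gt s).
  assert (wt t * wt t <= (wt s + (t - s)) * (wt s + (t - s))) by nra.
  nra.
Qed.

Lemma wt_cauchy_schwarz s t : Rabs (1 + s * t) <= wt s * wt t.
Proof.
  pose proof (wt_pos s); pose proof (wt_pos t); pose proof (wt_sq s); pose proof (wt_sq t).
  assert ((wt s * wt t) * (wt s * wt t) = (1 + s * s) * (1 + t * t)) by nra.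
  assert ((1 + s * t) * (1 + s * t) <= (wt s * wt t) * (wt s * wt t))
    by (pose proof (Rle_0_sqr (s - t)); unfold Rsqr in *; nra).
  assert (0 < wt s * wt t) by nra.
  apply Rabs_le. split; nra.
Qed.

Lemma wt_cauchy_schwarz_strict s t : s <> t -> Rabs (1 + s * t) < wt s * wt t.
Proof.
  intros Hst.
  pose proof (wt_pos s); pose proof (wt_pos t); pose proof (wt_sq s); pose proof (wt_sq t).
  assert ((wt s * wt t) * (wt s * wt t) = (1 + s * s) * (1 + t * t)) by nra.
  assert (0 < (s - t) * (s - t)) by (assert (s - t <> 0) by lra; nra).
  assert ((1 + s * t) * (1 + s * t) < (wt s * wt t) * (wt s * wt t)) by nra.
  assert (0 < wt s * wt t) by nra.
  apply Rabs_def1; nra.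
Qed.

Lemma wt_interp a t b : 0 <= a -> a < t < b -> (t - a) * wt b < (b - a) * wt t.
Proof.
  intros Ha Ht. pose proof (wt_lipschitz t b ltac:(lra)). pose proof (wt_gt t).
  assert ((t - a) * wt b <= (t - a) * (wt t + (b - t))) by (apply Rmult_le_compat_l; lra).
  assert ((t - a) * (b - t) < wt t * (b - t)) by (apply Rmult_lt_compat_r; lra).
  nra.
Qed.

Lemma wt_two_point_dual a t b : 0 <= a -> a <= t <= b ->
  Rabs ((b - t) * wt a - (t - a) * wt b) <= (b - a) * wt t.
Proof.
  intros Ha Ht. pose proof (wt_mono a t Ha ltac:(lra)). pose proof (wt_pos b).
  pose proof (wt_pos a). pose proof (wt_pos t).
  apply Rabs_le. split.
  - destruct (Req_dec t a) as [->|]; [nra|].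
    destruct (Req_dec t b) as [->|]; [nra|].
    pose proof (wt_interp a t b Ha ltac:(lra)). nra.
  - nra.
Qed.

Lemma wt_two_point_dual_strict a t b : 0 <= a -> a < t < b ->
  Rabs ((b - t) * wt a - (t - a) * wt b) < (b - a) * wt t.
Proof.
  intros Ha Ht. pose proof (wt_mono a t Ha ltac:(lra)). pose proof (wt_pos b).
  pose proof (wt_pos a). pose proof (wt_pos t). pose proof (wt_interp a t b Ha Ht).
  apply Rabs_def1; nra.
Qed.

Lemma wt_shrink_toward k s m : 0 < k < 1 -> 0 < s -> 0 < m ->
  k * wt s < wt ((1 - k) * m + k * s).
Proof.
  intros Hk Hs Hm. set (t := (1 - k) * m + k * s).
  pose proof (Rle_trans _ _ _ (Rle_abs _) (wt_cauchy_schwarz t s)).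
  pose proof (wt_pos s). pose proof (wt_sq s).
  assert (1 + t * s - k * (1 + s * s) = (1 - k) * (1 + m * s)) by (unfold t; ring).
  assert (0 < (1 - k) * (1 + m * s)) by (apply Rmult_lt_0_compat; nra).
  assert (k * wt s * wt s < wt t * wt s) by nra.
  nra.
Qed.

Lemma relu_of_nonneg z : 0 <= z -> relu z = z.
Proof. apply Rmax_right. Qed.

Lemma relu_of_nonpos z : z <= 0 -> relu z = 0.
Proof. apply Rmax_left. Qed.

Lemma relu_scale k z : 0 <= k -> relu (k * z) = k * relu z.
Proof.
  intros Hk. destruct (Rle_dec 0 z).
  - rewrite !relu_of_nonneg; nra.
  - rewrite !relu_of_nonpos; nra.
Qed.

Lemma relu_opp z : relu (- z) = relu z - z.
Proof.
  destruct (Rle_dec 0 z).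
  - rewrite relu_of_nonpos, relu_of_nonneg by lra. ring.
  - rewrite relu_of_nonneg, relu_of_nonpos by lra. ring.
Qed.

Definition hinge (t x : R) : R := relu (x - t).

(* A pair (c, t) stands for the hinge x |-> c * relu (x - t). *)
Definition hinges := list (R * R).

Definition hsum (l : hinges) (x : R) : R :=
  fold_right (fun r acc => fst r * hinge (snd r) x + acc) 0 l.
Definition hcost (l : hinges) : R :=
  fold_right (fun r acc => Rabs (fst r) * wt (snd r) + acc) 0 l.
Definition hmass (l : hinges) : R := fold_right (fun r acc => fst r + acc) 0 l.
Definition hmoment (l : hinges) : R := fold_right (fun r acc => fst r * snd r + acc) 0 l.
Definition hnet (l : hinges) (al be x : R) : R := hsum l x + al * x + be.

Lemma hsum_app l1 l2 x : hsum (l1 ++ l2) x = hsum l1 x + hsum l2 x.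
Proof. induction l1; simpl; [ring | rewrite IHl1; ring]. Qed.

Lemma hcost_app l1 l2 : hcost (l1 ++ l2) = hcost l1 + hcost l2.
Proof. induction l1; simpl; [ring | rewrite IHl1; ring]. Qed.

Lemma hcost_nonneg l : 0 <= hcost l.
Proof.
  induction l as [|[c t] l IH]; simpl; [lra|].
  pose proof (Rabs_pos c). pose proof (wt_pos t). nra.
Qed.

Lemma hsum_filter (f : R * R -> bool) l x :
  hsum l x = hsum (filter f l) x + hsum (filter (fun r => negb (f r)) l) x.
Proof. induction l; simpl; [ring | destruct (f a); simpl; rewrite IHl; ring]. Qed.

Lemma hcost_filter (f : R * R -> bool) l :
  hcost l = hcost (filter f l) + hcost (filter (fun r => negb (f r)) l).
Proof. induction l; simpl; [ring | destruct (f a); simpl; rewrite IHl; ring]. Qed.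

(** * Neurons as hinges *)

(* a * relu (w x + b) = c * relu (x - t) + (slope * x + intercept), with t = -b/w;
   for w < 0 this uses relu (-y) = relu y - y. *)
Definition neuron_hinge (p : R * R * R) : (R * R) * (R * R) :=
  let '(a, w, b) := p in
  match Rlt_dec 0 w with
  | left _ => ((a * w, - b / w), (0, 0))
  | right _ =>
      match Rlt_dec w 0 with
      | left _ => ((- (a * w), - b / w), (a * w, a * b))
      | right _ => ((0, 0), (0, a * relu b))
      end
  end.

Arguments neuron_hinge : simpl never.

Definition hinges_of (th : neurons) : hinges := map (fun p => fst (neuron_hinge p)) th.
Definition skip_slope (th : neurons) : R :=
  fold_right (fun p acc => fst (snd (neuron_hinge p)) + acc) 0 th.
Definition skip_intercept (th : neurons) : R :=
  fold_right (fun p acc => snd (snd (neuron_hinge p)) + acc) 0 th.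

Lemma neuron_hinge_eval a w b x :
  a * relu (w * x + b) =
  fst (fst (neuron_hinge (a, w, b))) * hinge (snd (fst (neuron_hinge (a, w, b)))) x
  + fst (snd (neuron_hinge (a, w, b))) * x + snd (snd (neuron_hinge (a, w, b))).
Proof.
  unfold neuron_hinge, hinge. destruct (Rlt_dec 0 w); simpl.
  - replace (w * x + b) with (w * (x - - b / w)) by (field; lra).
    rewrite relu_scale by lra. ring.
  - destruct (Rlt_dec w 0); simpl.
    + replace (w * x + b) with (- w * - (x - - b / w)) by (field; lra).
      rewrite relu_scale, relu_opp by lra. field. lra.
    + replace w with 0 by lra. replace (0 * x + b) with b by ring. ring.
Qed.

(* AM-GM: a^2 + w^2 + b^2 = a^2 + w^2 (1 + t^2) >= 2 |a w| wt t. *)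
Lemma neuron_hinge_cost a w b :
  2 * (Rabs (fst (fst (neuron_hinge (a, w, b)))) * wt (snd (fst (neuron_hinge (a, w, b)))))
  <= a ^ 2 + w ^ 2 + b ^ 2.
Proof.
  assert (Hgen : w <> 0 -> 2 * (Rabs (a * w) * wt (- b / w)) <= a ^ 2 + w ^ 2 + b ^ 2).
  { intros Hw. set (t := - b / w).
    assert (Hb : b = - w * t) by (unfold t; field; auto).
    pose proof (wt_sq t). pose proof (wt_pos t).
    rewrite Rabs_mult. pose proof (Rabs_pos a). pose proof (Rabs_pos w).
    assert (Rabs a * Rabs a = a * a) by (rewrite <- Rabs_mult; apply Rabs_pos_eq; nra).
    assert (Rabs w * Rabs w = w * w) by (rewrite <- Rabs_mult; apply Rabs_pos_eq; nra).
    pose proof (Rle_0_sqr (Rabs a - Rabs w * wt t)). unfold Rsqr in *.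
    rewrite Hb. nra. }
  unfold neuron_hinge. destruct (Rlt_dec 0 w); simpl.
  - apply Hgen; lra.
  - destruct (Rlt_dec w 0); simpl.
    + rewrite Rabs_Ropp. apply Hgen; lra.
    + rewrite Rabs_R0. nra.
Qed.

Lemma net_hinges_of th a0 b0 x :
  net th a0 b0 x = hnet (hinges_of th) (skip_slope th + a0) (skip_intercept th + b0) x.
Proof.
  unfold net, hnet. induction th as [|[[a w] b] th IH]; simpl.
  - ring.
  - rewrite neuron_hinge_eval. lra.
Qed.

Lemma hcost_hinges_of th : 2 * hcost (hinges_of th) <= sqnorm th.
Proof.
  induction th as [|[[a w] b] th IH]; simpl; [lra|].
  pose proof (neuron_hinge_cost a w b). lra.
Qed.

(* The cheapest neuron realising c * relu (x - t): equality in the AM-GM above. *)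
Definition hinge_neuron (r : R * R) : R * R * R :=
  let (c, t) := r in
  match Req_EM_T c 0 with
  | left _ => (0, 0, 0)
  | right _ => let w := sqrt (Rabs c / wt t) in (c / w, w, - t * w)
  end.

Arguments hinge_neuron : simpl never.

Lemma hinge_neuron_spec c t x :
  (let '(a, w, b) := hinge_neuron (c, t) in a * relu (w * x + b)) = c * hinge t x /\
  (let '(a, w, b) := hinge_neuron (c, t) in a ^ 2 + w ^ 2 + b ^ 2) = 2 * (Rabs c * wt t).
Proof.
  unfold hinge_neuron, hinge. destruct (Req_EM_T c 0) as [->|Hc].
  - rewrite Rabs_R0. split; simpl; ring.
  - pose proof (wt_pos t) as Hwt. pose proof (wt_sq t) as Hwt2.
    assert (Hq : 0 < Rabs c / wt t) by (apply Rdiv_lt_0_compat; [apply Rabs_pos_lt|]; auto).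
    set (w := sqrt (Rabs c / wt t)).
    assert (Hw : 0 < w) by (apply sqrt_lt_R0; auto).
    assert (Hw2 : w * w = Rabs c / wt t) by (apply sqrt_sqrt; lra).
    split.
    + replace (w * x + - t * w) with (w * (x - t)) by ring.
      rewrite relu_scale by lra. field. lra.
    + assert (Hcc : c * c = Rabs c * Rabs c) by (rewrite <- Rabs_mult, Rabs_pos_eq; nra).
      simpl.
      replace (c / w * (c / w * 1) + w * (w * 1) + - t * w * (- t * w * 1))
        with (c * c / (w * w) + (w * w) * (1 + t * t)) by (field; lra).
      rewrite Hw2, Hcc, <- Hwt2. field. split; [lra | apply Rgt_not_eq, Rabs_pos_lt; auto].
Qed.

Lemma net_map_hinge_neuron l al be x : net (map hinge_neuron l) al be x = hnet l al be x.
Proof.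
  unfold net, hnet. induction l as [|[c t] l IH]; simpl; [ring|].
  destruct (hinge_neuron_spec c t x) as [H _].
  destruct (hinge_neuron (c, t)) as [[a w] b]. simpl in *. lra.
Qed.

Lemma sqnorm_map_hinge_neuron l : sqnorm (map hinge_neuron l) = 2 * hcost l.
Proof.
  induction l as [|[c t] l IH]; simpl; [ring|].
  destruct (hinge_neuron_spec c t 0) as [_ H].
  destruct (hinge_neuron (c, t)) as [[a w] b]. simpl in *. rewrite H, IH. ring.
Qed.

Definition hinterp (n : nat) (xs ys : nat -> R) (l : hinges) (al be : R) : Prop :=
  forall i, (1 <= i <= n)%nat -> hnet l al be (xs i) = ys i.

Definition hopt (n : nat) (xs ys : nat -> R) (l : hinges) (al be : R) : Prop :=
  hinterp n xs ys l al be /\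
  forall l' al' be', hinterp n xs ys l' al' be' -> hcost l <= hcost l'.

Lemma min_norm_interpolant_hopt n xs ys th a0 b0 :
  min_norm_interpolant n xs ys th a0 b0 ->
  hopt n xs ys (hinges_of th) (skip_slope th + a0) (skip_intercept th + b0).
Proof.
  intros [Hint Hmin]. split.
  - intros i Hi. rewrite <- net_hinges_of. auto.
  - intros l' al' be' Hint'.
    assert (Hnet : interpolates n xs ys (map hinge_neuron l') al' be').
    { intros i Hi. rewrite net_map_hinge_neuron. auto. }
    specialize (Hmin _ _ _ Hnet). rewrite sqnorm_map_hinge_neuron in Hmin.
    pose proof (hcost_hinges_of th). lra.
Qed.

(** * Exchange arguments and weak duality *)

Lemma hopt_exchange n xs ys l al be Q rest N da db :
  hopt n xs ys l al be ->
  (forall x, hsum l x = hsum Q x + hsum rest x) -> hcost l = hcost Q + hcost rest ->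
  (forall i, (1 <= i <= n)%nat -> hsum N (xs i) + da * xs i + db = hsum Q (xs i)) ->
  hcost Q <= hcost N.
Proof.
  intros [Hint Hmin] Hsum Hcost HN.
  assert (Hint' : hinterp n xs ys (rest ++ N) (al + da) (be + db)).
  { intros i Hi. rewrite <- (Hint i Hi). unfold hnet. rewrite hsum_app, Hsum, <- (HN i Hi). ring. }
  specialize (Hmin _ _ _ Hint'). rewrite hcost_app, Hcost in Hmin. lra.
Qed.

Lemma hopt_exchange_filter n xs ys l al be (f : R * R -> bool) N da db :
  hopt n xs ys l al be ->
  (forall i, (1 <= i <= n)%nat -> hsum N (xs i) + da * xs i + db = hsum (filter f l) (xs i)) ->
  hcost (filter f l) <= hcost N.
Proof.
  intros Hopt HN. eapply hopt_exchange; eauto.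
  - intros x. apply hsum_filter.
  - apply hcost_filter.
Qed.

Lemma hopt_exchange_one n xs ys l1 c t l2 al be N da db :
  hopt n xs ys (l1 ++ (c, t) :: l2) al be ->
  (forall i, (1 <= i <= n)%nat -> hsum N (xs i) + da * xs i + db = c * hinge t (xs i)) ->
  Rabs c * wt t <= hcost N.
Proof.
  intros Hopt HN.
  replace (Rabs c * wt t) with (hcost ((c, t) :: nil)) by (simpl; ring).
  apply (hopt_exchange n xs ys _ _ _ _ (l1 ++ l2) N da db Hopt).
  - intros x. rewrite !hsum_app. simpl. ring.
  - rewrite !hcost_app. simpl. ring.
  - intros i Hi. rewrite HN by auto. simpl. ring.
Qed.

Lemma Rabs_sub_opposite u v x y :
  u * v <= 0 -> 0 <= x -> 0 <= y -> Rabs (u * x - v * y) = Rabs u * x + Rabs v * y.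
Proof.
  intros Huv Hx Hy.
  assert (Hcase : (0 <= u /\ v <= 0) \/ (u <= 0 /\ 0 <= v)).
  { destruct (Rle_dec 0 u), (Rle_dec 0 v);
      [destruct (Req_dec v 0); [left | right]; nra | left; lra | right; lra | nra]. }
  destruct Hcase as [[Hu Hv]|[Hu Hv]].
  - rewrite (Rabs_pos_eq u), (Rabs_left1 v), Rabs_pos_eq by nra. ring.
  - rewrite (Rabs_left1 u), (Rabs_pos_eq v), Rabs_left1 by nra. ring.
Qed.

Lemma hcost_ge_dual p q d Q :
  0 <= d -> (forall c t, In (c, t) Q -> Rabs (p + q * t) <= d * wt t) ->
  Rabs (p * hmass Q + q * hmoment Q) <= d * hcost Q.
Proof.
  intros Hd. induction Q as [|[c t] Q IH]; intros Hdual; simpl.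
  - replace (p * 0 + q * 0) with 0 by ring. rewrite Rabs_R0. lra.
  - replace (p * (c + hmass Q) + q * (c * t + hmoment Q))
      with (c * (p + q * t) + (p * hmass Q + q * hmoment Q)) by ring.
    pose proof (Rabs_triang (c * (p + q * t)) (p * hmass Q + q * hmoment Q)).
    rewrite Rabs_mult in *. pose proof (Rabs_pos c).
    pose proof (Hdual c t (or_introl eq_refl)).
    assert (Rabs c * Rabs (p + q * t) <= Rabs c * (d * wt t)) by (apply Rmult_le_compat_l; lra).
    specialize (IH (fun c' t' H => Hdual c' t' (or_intror H))). lra.
Qed.

Lemma hcost_gt_dual p q d Q c0 t0 :
  0 <= d -> (forall c t, In (c, t) Q -> Rabs (p + q * t) <= d * wt t) ->
  In (c0, t0) Q -> c0 <> 0 -> Rabs (p + q * t0) < d * wt t0 ->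
  Rabs (p * hmass Q + q * hmoment Q) < d * hcost Q.
Proof.
  intros Hd. induction Q as [|[c t] Q IH]; intros Hdual Hin Hc0 Hlt; simpl in *; [contradiction|].
  replace (p * (c + hmass Q) + q * (c * t + hmoment Q))
    with (c * (p + q * t) + (p * hmass Q + q * hmoment Q)) by ring.
  pose proof (Rabs_triang (c * (p + q * t)) (p * hmass Q + q * hmoment Q)).
  rewrite Rabs_mult in *. pose proof (Rabs_pos c).
  pose proof (Hdual c t (or_introl eq_refl)).
  assert (HQ : forall c' t', In (c', t') Q -> Rabs (p + q * t') <= d * wt t')
    by (intros; eapply Hdual; right; eauto).
  destruct Hin as [E | Hin].
  - injection E as -> ->. pose proof (Rabs_pos_lt c0 Hc0).
    assert (Rabs c0 * Rabs (p + q * t0) < Rabs c0 * (d * wt t0)) by (apply Rmult_lt_compat_l; lra).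
    pose proof (hcost_ge_dual p q d Q Hd HQ). lra.
  - assert (Rabs c * Rabs (p + q * t) <= Rabs c * (d * wt t)) by (apply Rmult_le_compat_l; lra).
    specialize (IH HQ Hin Hc0 Hlt). lra.
Qed.

Definition at_kink (t : R) (r : R * R) : bool := if Req_EM_T (snd r) t then true else false.
Definition slope_jump (t : R) (l : hinges) : R := hmass (filter (at_kink t) l).
Definition remove_kink (t : R) (l : hinges) : hinges := filter (fun r => negb (at_kink t r)) l.

Lemma hsum_split_kink t l x :
  hsum l x = slope_jump t l * hinge t x + hsum (remove_kink t l) x.
Proof.
  unfold slope_jump, remove_kink.
  induction l as [|[c s] l IH]; simpl; [ring|].
  unfold at_kink in *; simpl. destruct (Req_EM_T s t) as [->|]; simpl; rewrite IH; ring.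
Qed.

Lemma hcost_split_kink t l :
  Rabs (slope_jump t l) * wt t + hcost (remove_kink t l) <= hcost l.
Proof.
  unfold slope_jump, remove_kink.
  induction l as [|[c s] l IH]; simpl; [rewrite Rabs_R0; lra|].
  unfold at_kink in *; simpl. destruct (Req_EM_T s t) as [->|]; simpl; [|lra].
  match goal with |- Rabs (c + ?m) * _ + _ <= _ => pose proof (Rabs_triang c m) end.
  pose proof (wt_pos t). nra.
Qed.

Lemma In_remove_kink r t l : In r (remove_kink t l) -> In r l /\ snd r <> t.
Proof.
  unfold remove_kink, at_kink. intros H. apply filter_In in H as [Hin Hr].
  destruct (Req_EM_T (snd r) t); [discriminate | auto].
Qed.

Lemma slope_jump_remove_kink s t l :
  s <> t -> slope_jump s (remove_kink t l) = slope_jump s l.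
Proof.
  intros Hst. unfold slope_jump, remove_kink.
  induction l as [|[c u] l IH]; simpl; [reflexivity|].
  unfold at_kink in *; simpl.
  destruct (Req_EM_T u t) as [->|]; simpl.
  - destruct (Req_EM_T t s); [congruence|]. auto.
  - destruct (Req_EM_T u s); simpl; rewrite IH; reflexivity.
Qed.

Lemma slope_jump_inactive t l : (forall c, In (c, t) l -> c = 0) -> slope_jump t l = 0.
Proof.
  unfold slope_jump. induction l as [|[c s] l IH]; intros H; simpl; [reflexivity|].
  unfold at_kink in *; simpl. destruct (Req_EM_T s t) as [->|]; simpl.
  - rewrite (H c (or_introl eq_refl)), IH; [ring|]. intros; apply H; right; auto.
  - apply IH. intros; apply H; right; auto.
Qed.

Lemma hsum_inactive l x : (forall c t, In (c, t) l -> c = 0) -> hsum l x = 0.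
Proof.
  induction l as [|[c t] l IH]; intros H; simpl; [reflexivity|].
  rewrite (H c t (or_introl eq_refl)), IH; [ring|]. intros; eapply H; right; eauto.
Qed.

Lemma hsum_affine_on l p q :
  (forall c t, In (c, t) l -> c <> 0 -> t <= p \/ q <= t) ->
  exists al be, forall x, p <= x <= q -> hsum l x = al * x + be.
Proof.
  induction l as [|[c t] l IH]; intros Hkinks; simpl.
  - exists 0, 0. intros. ring.
  - destruct IH as [al [be IH]]; [intros; eapply Hkinks; eauto; right; eauto|].
    destruct (Req_dec c 0) as [->|Hc].
    + exists al, be. intros x Hx. rewrite IH by auto. ring.
    + destruct (Hkinks c t (or_introl eq_refl) Hc) as [Ht|Ht].
      * exists (al + c), (be - c * t). intros x Hx. unfold hinge.
        rewrite IH, relu_of_nonneg by lra. ring.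
      * exists al, be. intros x Hx. unfold hinge.
        rewrite IH, relu_of_nonpos by lra. ring.
Qed.

Lemma hsum_two_kinks Q t1 t2 :
  t1 <> t2 -> (forall c t, In (c, t) Q -> c <> 0 -> t = t1 \/ t = t2) ->
  (forall x, hsum Q x = slope_jump t1 Q * hinge t1 x + slope_jump t2 Q * hinge t2 x) /\
  Rabs (slope_jump t1 Q) * wt t1 + Rabs (slope_jump t2 Q) * wt t2 <= hcost Q.
Proof.
  intros H21 Hkinks.
  set (rest := remove_kink t2 (remove_kink t1 Q)).
  assert (Hrest : forall c t, In (c, t) rest -> c = 0).
  { intros c t Hin. apply NNPP. intros Hc.
    apply In_remove_kink in Hin as [Hin Ht2]. apply In_remove_kink in Hin as [Hin Ht1].
    destruct (Hkinks c t Hin Hc); contradiction. }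
  assert (HJ2 : slope_jump t2 (remove_kink t1 Q) = slope_jump t2 Q)
    by (apply slope_jump_remove_kink; auto).
  split.
  - intros x. rewrite (hsum_split_kink t1 Q), (hsum_split_kink t2 (remove_kink t1 Q)).
    fold rest. rewrite HJ2, (hsum_inactive rest x Hrest). ring.
  - pose proof (hcost_split_kink t1 Q) as H1.
    pose proof (hcost_split_kink t2 (remove_kink t1 Q)) as H2.
    rewrite HJ2 in H2. fold rest in H2. pose proof (hcost_nonneg rest). lra.
Qed.

Lemma hsum_three_kinks l p q t1 t0 t2 :
  t1 <> t0 -> t2 <> t0 -> t2 <> t1 ->
  (forall c t, In (c, t) l -> c <> 0 -> p < t < q -> t = t1 \/ t = t0 \/ t = t2) ->
  exists al be, forall x, p <= x <= q ->
    hsum l x = hnet ((slope_jump t1 l, t1) :: (slope_jump t0 l, t0) :: (slope_jump t2 l, t2) :: nil)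
                    al be x.
Proof.
  intros H10 H20 H21 Hkinks.
  set (rest := remove_kink t2 (remove_kink t1 (remove_kink t0 l))).
  assert (Hrest : forall c t, In (c, t) rest -> c <> 0 -> t <= p \/ q <= t).
  { intros c t Hin Hc.
    apply In_remove_kink in Hin as [Hin Ht2]. apply In_remove_kink in Hin as [Hin Ht1].
    apply In_remove_kink in Hin as [Hin Ht0]. simpl in *.
    destruct (Rle_dec t p); [auto|]. destruct (Rle_dec q t); [auto|].
    exfalso. destruct (Hkinks c t Hin Hc) as [|[|]]; [lra|congruence..]. }
  destruct (hsum_affine_on rest p q Hrest) as [al [be Haff]].
  exists al, be. intros x Hx.
  rewrite (hsum_split_kink t0), (hsum_split_kink t1 (remove_kink t0 l)),
    (hsum_split_kink t2 (remove_kink t1 _)).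
  fold rest. rewrite Haff by auto.
  rewrite !slope_jump_remove_kink by auto.
  unfold hnet. simpl. ring.
Qed.

(** * Chords of convex sums of hinges *)

(* (q - p) times the height of f x above the line through (p, f p) and (q, f q). *)
Definition chord_gap (f : R -> R) (p q x : R) : R := (q - p) * f x - (q - x) * f p - (x - p) * f q.

Lemma chord_gap_hinge_inside t p q x : p <= x <= q -> chord_gap (hinge t) p q x <= 0.
Proof.
  intros Hx. unfold chord_gap, hinge.
  destruct (Rle_dec t p); [rewrite !relu_of_nonneg by lra; nra|].
  destruct (Rle_dec q t); [rewrite !relu_of_nonpos by lra; nra|].
  rewrite (relu_of_nonpos (p - t)), (relu_of_nonneg (q - t)) by lra.
  destruct (Rle_dec x t); [rewrite relu_of_nonpos by lra | rewrite relu_of_nonneg by lra]; nra.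
Qed.

Lemma chord_gap_hinge_flat t p q x :
  p <= x <= q -> t <= p \/ q <= t -> chord_gap (hinge t) p q x = 0.
Proof.
  intros Hx [Ht|Ht]; unfold chord_gap, hinge.
  - rewrite !relu_of_nonneg by lra. ring.
  - rewrite !relu_of_nonpos by lra. ring.
Qed.

Lemma chord_gap_hinge_outside t p q x :
  p < q -> x <= p \/ q <= x -> 0 <= chord_gap (hinge t) p q x.
Proof.
  intros Hpq Hx. unfold chord_gap, hinge.
  destruct (Rle_dec (p - t) 0); destruct (Rle_dec (q - t) 0); destruct (Rle_dec (x - t) 0);
    repeat first [rewrite (relu_of_nonpos (p - t)) by lra | rewrite (relu_of_nonneg (p - t)) by lra];
    repeat first [rewrite (relu_of_nonpos (q - t)) by lra | rewrite (relu_of_nonneg (q - t)) by lra];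
    repeat first [rewrite (relu_of_nonpos (x - t)) by lra | rewrite (relu_of_nonneg (x - t)) by lra];
    nra.
Qed.

Lemma chord_gap_hnet_cons c t l al be p q x :
  chord_gap (hnet ((c, t) :: l) al be) p q x
  = c * chord_gap (hinge t) p q x + chord_gap (hnet l al be) p q x.
Proof. unfold chord_gap, hnet. simpl. ring. Qed.

Lemma chord_gap_hnet_inside s l al be p q x :
  p <= x <= q -> (forall c t, In (c, t) l -> p < t < q -> 0 <= s * c) ->
  s * chord_gap (hnet l al be) p q x <= 0.
Proof.
  intros Hx. induction l as [|[c t] l IH]; intros Hsign.
  - unfold chord_gap, hnet. simpl. nra.
  - rewrite chord_gap_hnet_cons.
    assert (IH' := IH (fun c' t' H => Hsign c' t' (or_intror H))).
    destruct (Rle_dec t p); [|destruct (Rle_dec q t)].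
    1,2: rewrite chord_gap_hinge_flat by (auto || lra); lra.
    pose proof (Hsign c t (or_introl eq_refl) ltac:(lra)).
    pose proof (chord_gap_hinge_inside t p q x Hx). nra.
Qed.

Lemma chord_gap_hnet_outside s l al be p q x :
  p < q -> x <= p \/ q <= x -> (forall c t, In (c, t) l -> 0 <= s * c) ->
  0 <= s * chord_gap (hnet l al be) p q x.
Proof.
  intros Hpq Hx. induction l as [|[c t] l IH]; intros Hsign.
  - unfold chord_gap, hnet. simpl. nra.
  - rewrite chord_gap_hnet_cons.
    assert (IH' := IH (fun c' t' H => Hsign c' t' (or_intror H))).
    pose proof (Hsign c t (or_introl eq_refl)).
    pose proof (chord_gap_hinge_outside t p q x Hpq Hx). nra.
Qed.

(* The sign s makes the sum convex (s > 0) or concave (s < 0). *)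
Lemma hnet_chord_gaps_opposite s l al be a' a b b' x :
  s <> 0 -> a' < a -> a <= x <= b -> b < b' -> (forall c t, In (c, t) l -> 0 <= s * c) ->
  chord_gap (hnet l al be) a b x * chord_gap (hnet l al be) a' a x <= 0 /\
  chord_gap (hnet l al be) a b x * chord_gap (hnet l al be) b b' x <= 0.
Proof.
  intros Hs Ha Hx Hb Hsign.
  assert (Hin : s * chord_gap (hnet l al be) a b x <= 0)
    by (apply chord_gap_hnet_inside; [lra | intros; eapply Hsign; eauto]).
  assert (Hl : 0 <= s * chord_gap (hnet l al be) a' a x)
    by (apply chord_gap_hnet_outside; auto; lra).
  assert (Hr : 0 <= s * chord_gap (hnet l al be) b b' x)
    by (apply chord_gap_hnet_outside; auto; lra).
  assert (0 < s * s) by nra.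
  split; apply (Rmult_le_reg_l (s * s)); nra.
Qed.

Lemma three_hinges_chord_gaps J1 J0 J2 t1 t0 t2 al be a' a b b' x :
  a' < a -> a <= x <= b -> b < b' -> t1 <= a -> b <= t2 ->
  0 <= J1 * J0 -> 0 <= J2 * J0 ->
  let h := hnet ((J1, t1) :: (J0, t0) :: (J2, t2) :: nil) al be in
  chord_gap h a b x * chord_gap h a' a x <= 0 /\ chord_gap h a b x * chord_gap h b b' x <= 0.
Proof.
  intros Ha Hx Hb Ht1 Ht2 HJ1 HJ2 h.
  destruct (Req_dec J0 0) as [HJ0|HJ0].
  - assert (Hsign : forall s c t, In (c, t) ((J1, t1) :: (J0, t0) :: (J2, t2) :: nil) ->
                      a < t < b -> 0 <= s * c).
    { intros s c t Hin Ht. simpl in Hin.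
      destruct Hin as [E|[E|[E|[]]]]; injection E as Ec Et; subst c t; nra. }
    assert (Hflat : chord_gap h a b x = 0).
    { pose proof (chord_gap_hnet_inside 1 _ al be a b x Hx (Hsign 1)) as Hup.
      pose proof (chord_gap_hnet_inside (-1) _ al be a b x Hx (Hsign (-1))) as Hlow.
      fold h in Hup, Hlow. lra. }
    rewrite Hflat. lra.
  - apply (hnet_chord_gaps_opposite J0); auto.
    intros c t Hin. simpl in Hin.
    destruct Hin as [E|[E|[E|[]]]]; injection E as Ec Et; subst c t; nra.
Qed.

Lemma chord_gap_ext f g p q x :
  f p = g p -> f q = g q -> f x = g x -> chord_gap f p q x = chord_gap g p q x.
Proof. intros Hp Hq Hx. unfold chord_gap. rewrite Hp, Hq, Hx. reflexivity. Qed.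

Lemma chord_gap_affine f al be p q x :
  f p = al * p + be -> f q = al * q + be -> f x = al * x + be -> chord_gap f p q x = 0.
Proof. intros Hp Hq Hx. unfold chord_gap. rewrite Hp, Hq, Hx. ring. Qed.

Lemma chord_gap_gseg f xs ys i x :
  f (xs i) = ys i -> f (xs (S i)) = ys (S i) -> xs i < xs (S i) ->
  chord_gap f (xs i) (xs (S i)) x = (xs (S i) - xs i) * (f x - gseg xs ys i x).
Proof. intros Hi HSi Hlt. unfold chord_gap, gseg. rewrite Hi, HSi. field. lra. Qed.

Lemma gseg_of_affine_on f al be p q xs ys i x :
  (forall y, p <= y <= q -> f y = al * y + be) ->
  p <= xs i -> xs (S i) <= q -> p <= x <= q -> xs i < xs (S i) ->
  f (xs i) = ys i -> f (xs (S i)) = ys (S i) ->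
  f x = gseg xs ys i x.
Proof.
  intros Haff Hp Hq Hx Hlt Hi HSi.
  assert (Hgap : chord_gap f (xs i) (xs (S i)) x = 0)
    by (apply (chord_gap_affine f al be); apply Haff; lra).
  rewrite (chord_gap_gseg f xs ys) in Hgap by auto.
  apply Rmult_integral in Hgap as [|]; lra.
Qed.

Definition in_window (a b : R) (r : R * R) : bool :=
  if Rle_dec a (snd r) then if Rle_dec (snd r) b then true else false else false.

Lemma in_window_spec a b r : in_window a b r = true <-> a <= snd r <= b.
Proof.
  unfold in_window.
  destruct (Rle_dec a (snd r)); destruct (Rle_dec (snd r) b); split; intros; try lra; easy.
Qed.

Lemma In_window a b r l : In r (filter (in_window a b) l) <-> In r l /\ a <= snd r <= b.
Proof. rewrite filter_In, in_window_spec. reflexivity. Qed.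

Lemma slope_jump_window a b t l :
  a <= t <= b -> slope_jump t (filter (in_window a b) l) = slope_jump t l.
Proof.
  intros Ht. unfold slope_jump.
  induction l as [|[c s] l IH]; simpl; [reflexivity|].
  destruct (in_window a b (c, s)) eqn:Hw; simpl.
  - destruct (at_kink t (c, s)); simpl; rewrite IH; reflexivity.
  - unfold at_kink at 2; simpl. destruct (Req_EM_T s t) as [->|]; [|exact IH].
    assert (in_window a b (c, t) = true) by (apply in_window_spec; auto). congruence.
Qed.

Lemma hsum_kinks_above Q a x : (forall r, In r Q -> a <= snd r) -> x <= a -> hsum Q x = 0.
Proof.
  induction Q as [|[c t] Q IH]; intros H Hx; simpl; [reflexivity|].
  pose proof (H (c, t) (or_introl eq_refl)). simpl in *. unfold hinge.
  rewrite IH, relu_of_nonpos by (auto || lra). ring.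
Qed.

Lemma hsum_kinks_below Q b x :
  (forall r, In r Q -> snd r <= b) -> b <= x -> hsum Q x = hmass Q * x - hmoment Q.
Proof.
  induction Q as [|[c t] Q IH]; intros H Hx; simpl; [ring|].
  pose proof (H (c, t) (or_introl eq_refl)). simpl in *. unfold hinge.
  rewrite IH, relu_of_nonneg by (auto || lra). ring.
Qed.

Lemma two_hinges_reposition a m b t1 t2 s1 s2 k1 k2 E1 E2 :
  0 < a -> a <= s1 <= m -> m <= s2 <= b -> 0 < k1 < 1 -> 0 < k2 < 1 -> E1 * E2 < 0 ->
  t1 = (1 - k1) * m + k1 * s1 -> t2 = (1 - k2) * m + k2 * s2 ->
  (1 - k1) * E1 + (1 - k2) * E2 = 0 ->
  let N := (k1 * E1, s1) :: (k2 * E2, s2) :: nil in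
  hcost N < Rabs E1 * wt t1 + Rabs E2 * wt t2 /\
  forall x, x <= a \/ x = m \/ b <= x -> hsum N x = E1 * hinge t1 x + E2 * hinge t2 x.
Proof.
  intros Ha Hs1 Hs2 Hk1 Hk2 HE Ht1 Ht2 Hbal N. split.
  - assert (0 < Rabs E1) by (apply Rabs_pos_lt; intros ->; lra).
    assert (0 < Rabs E2) by (apply Rabs_pos_lt; intros ->; lra).
    pose proof (wt_shrink_toward k1 s1 m Hk1 ltac:(lra) ltac:(lra)).
    pose proof (wt_shrink_toward k2 s2 m Hk2 ltac:(lra) ltac:(lra)).
    rewrite <- Ht1, <- Ht2 in *.
    simpl. rewrite !Rabs_mult, (Rabs_pos_eq k1), (Rabs_pos_eq k2) by lra. nra.
  - intros x [Hx|[->|Hx]]; simpl; unfold hinge.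
    + rewrite !relu_of_nonpos by nra. ring.
    + rewrite (relu_of_nonpos (m - s2)), (relu_of_nonpos (m - t2)),
        (relu_of_nonneg (m - s1)), (relu_of_nonneg (m - t1)) by nra.
      rewrite Ht1. ring.
    + rewrite !relu_of_nonneg by nra.
      transitivity (E1 * (x - t1) + E2 * (x - t2) - (x - m) * ((1 - k1) * E1 + (1 - k2) * E2));
        [rewrite Ht1, Ht2; ring | rewrite Hbal; ring].
Qed.

(* Two kinks bending in opposite directions on either side of a data point m: shrinking both
   coefficients by the same amount and moving both kinks toward m keeps the values at m and
   beyond the window and lowers the cost. *)
Lemma two_hinges_shrink a t1 m t2 b E1 E2 :
  0 < a -> a < t1 < m -> m < t2 < b -> E1 * E2 < 0 ->
  exists N, hcost N < Rabs E1 * wt t1 + Rabs E2 * wt t2 /\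
    forall x, x <= a \/ x = m \/ b <= x -> hsum N x = E1 * hinge t1 x + E2 * hinge t2 x.
Proof.
  intros Ha Ht1 Ht2 HE.
  assert (Hd1 : 0 < Rabs E1) by (apply Rabs_pos_lt; intros ->; lra).
  assert (Hd2 : 0 < Rabs E2) by (apply Rabs_pos_lt; intros ->; lra).
  set (D1 := Rabs E1 * (t1 - a) / (m - a)). set (D2 := Rabs E2 * (b - t2) / (b - m)).
  set (delta := Rmin D1 D2).
  assert (Hdelta : 0 < delta) by (apply Rmin_pos; apply Rdiv_lt_0_compat; nra).
  assert (HD1 : delta * (m - a) <= Rabs E1 * (t1 - a)).
  { replace (Rabs E1 * (t1 - a)) with (D1 * (m - a)) by (unfold D1; field; lra).
    apply Rmult_le_compat_r; [lra | apply Rmin_l]. }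
  assert (HD2 : delta * (b - m) <= Rabs E2 * (b - t2)).
  { replace (Rabs E2 * (b - t2)) with (D2 * (b - m)) by (unfold D2; field; lra).
    apply Rmult_le_compat_r; [lra | apply Rmin_r]. }
  set (k1 := 1 - delta / Rabs E1). set (k2 := 1 - delta / Rabs E2).
  assert (Hk1 : m - t1 <= k1 * (m - a))
    by (apply (Rmult_le_reg_l (Rabs E1)); [lra | unfold k1; field_simplify; lra]).
  assert (Hk2 : t2 - m <= k2 * (b - m))
    by (apply (Rmult_le_reg_l (Rabs E2)); [lra | unfold k2; field_simplify; lra]).
  assert (Hk1' : 0 < k1 < 1)
    by (split; [nra | assert (0 < delta / Rabs E1) by (apply Rdiv_lt_0_compat; lra); unfold k1; lra]).
  assert (Hk2' : 0 < k2 < 1)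
    by (split; [nra | assert (0 < delta / Rabs E2) by (apply Rdiv_lt_0_compat; lra); unfold k2; lra]).
  set (s1 := m - (m - t1) / k1). set (s2 := m + (t2 - m) / k2).
  assert (Hs1 : a <= s1 <= m).
  { assert (0 < (m - t1) / k1) by (apply Rdiv_lt_0_compat; lra).
    assert ((m - t1) / k1 * k1 <= (m - a) * k1) by (field_simplify; lra).
    unfold s1. nra. }
  assert (Hs2 : m <= s2 <= b).
  { assert (0 < (t2 - m) / k2) by (apply Rdiv_lt_0_compat; lra).
    assert ((t2 - m) / k2 * k2 <= (b - m) * k2) by (field_simplify; lra).
    unfold s2. nra. }
  assert (Hbal : (1 - k1) * E1 + (1 - k2) * E2 = 0).
  { unfold k1, k2. destruct (Rlt_dec 0 E1).
    - rewrite (Rabs_pos_eq E1), (Rabs_left E2) by nra. field. nra.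
    - rewrite (Rabs_left E1), (Rabs_pos_eq E2) by (destruct (Req_dec E1 0); nra). field. nra. }
  eexists. apply (two_hinges_reposition a m b t1 t2 s1 s2 k1 k2 E1 E2); auto;
    unfold s1, s2; field; lra.
Qed.

(** * Structure of an optimal interpolant *)

Section OptimalInterpolant.

Variables (n : nat) (xs ys : nat -> R).
Hypothesis xs_increasing : forall i, (1 <= i < n)%nat -> xs i < xs (S i).
Hypothesis xs_1_pos : 0 < xs 1%nat.

Lemma xs_lt j k : (1 <= j)%nat -> (j < k <= n)%nat -> xs j < xs k.
Proof.
  intros Hj Hk. induction k as [|k IH]; [lia|].
  destruct (Nat.eq_dec j k) as [->|]; [apply xs_increasing; lia|].
  apply Rlt_trans with (xs k); [apply IH; lia | apply xs_increasing; lia].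
Qed.

Lemma xs_le j k : (1 <= j)%nat -> (j <= k <= n)%nat -> xs j <= xs k.
Proof.
  intros Hj Hk. destruct (Nat.eq_dec j k) as [->|]; [lra|]. left. apply xs_lt; lia.
Qed.

Lemma xs_pos j : (1 <= j <= n)%nat -> 0 < xs j.
Proof.
  intros Hj. destruct (Nat.eq_dec j 1) as [->|]; [auto|].
  apply Rlt_trans with (xs 1%nat); [auto | apply xs_lt; lia].
Qed.

Variables (l : hinges) (al be : R).
Hypothesis l_opt : hopt n xs ys l al be.

(* On the data, a kink t in (x_1, x_2) acts as an affine function plus the fraction
   (t - x_1) / (x_2 - x_1) of a kink at x_2, which is cheaper. *)
Lemma hopt_kink_ge_x2 c t : (2 <= n)%nat -> In (c, t) l -> c <> 0 -> xs 2%nat <= t.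
Proof.
  intros Hn Hin Hc. destruct (in_split _ _ Hin) as (l1 & l2 & E). rewrite E in l_opt.
  apply Rnot_lt_le. intros Ht.
  set (x1 := xs 1%nat) in *. set (x2 := xs 2%nat) in *.
  assert (H12 : x1 < x2) by (apply xs_increasing; lia).
  assert (Hdata : forall i, (1 <= i <= n)%nat -> i = 1%nat \/ x2 <= xs i)
    by (intros i Hi; destruct (Nat.eq_dec i 1); [auto | right; apply xs_le; lia]).
  pose proof (Rabs_pos_lt c Hc). pose proof (wt_pos t).
  destruct (Rle_dec t x1).
  - pose proof (hopt_exchange_one _ _ _ _ _ _ _ _ _ nil c (- c * t) l_opt) as Hcost.
    simpl in Hcost. enough (Rabs c * wt t <= 0) by nra.
    apply Hcost. intros i Hi. unfold hinge. rewrite relu_of_nonneg; [ring|].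
    pose proof (xs_le 1 i ltac:(lia) ltac:(lia)) as Hle. fold x1 in Hle. lra.
  - set (beta := (t - x1) / (x2 - x1)).
    assert (Hbeta : t = (1 - beta) * x1 + beta * x2) by (unfold beta; field; lra).
    assert (Hbeta0 : 0 < beta) by (apply Rdiv_lt_0_compat; lra).
    pose proof (hopt_exchange_one _ _ _ _ _ _ _ _ _ ((c * beta, x2) :: nil)
                  (c * (1 - beta)) (- c * (1 - beta) * x1) l_opt) as Hcost.
    assert (Hcheaper : Rabs c * (beta * wt x2) < Rabs c * wt t).
    { apply Rmult_lt_compat_l; [lra|].
      apply (Rmult_lt_reg_l (x2 - x1)); [lra|].
      replace ((x2 - x1) * (beta * wt x2)) with ((t - x1) * wt x2) by (unfold beta; field; lra).
      apply wt_interp; lra. }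
    enough (Rabs c * wt t <= Rabs c * (beta * wt x2)) by lra.
    replace (Rabs c * (beta * wt x2)) with (hcost ((c * beta, x2) :: nil))
      by (simpl; rewrite Rabs_mult, (Rabs_pos_eq beta) by lra; ring).
    apply Hcost. intros i Hi. simpl. unfold hinge.
    destruct (Hdata i Hi) as [->|Hx].
    + rewrite !relu_of_nonpos by (fold x1; lra). fold x1. ring.
    + rewrite !relu_of_nonneg by lra. rewrite Hbeta. ring.
Qed.

(* On the data, a kink t in (x_{n-1}, x_n) acts as the fraction (x_n - t) / (x_n - x_{n-1})
   of a kink at x_{n-1}, which is cheaper. *)
Lemma hopt_kink_le_xpred c t : (2 <= n)%nat -> In (c, t) l -> c <> 0 -> t <= xs (n - 1)%nat.
Proof.
  intros Hn Hin Hc. destruct (in_split _ _ Hin) as (l1 & l2 & E). rewrite E in l_opt.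
  apply Rnot_lt_le. intros Ht.
  set (xp := xs (n - 1)%nat) in *. set (xn := xs n) in *.
  assert (Hpn : xp < xn)
    by (unfold xp, xn; replace n with (S (n - 1)) at 2 by lia; apply xs_increasing; lia).
  assert (Hdata : forall i, (1 <= i <= n)%nat -> i = n \/ xs i <= xp)
    by (intros i Hi; destruct (Nat.eq_dec i n); [auto | right; apply xs_le; lia]).
  pose proof (Rabs_pos_lt c Hc). pose proof (wt_pos t).
  destruct (Rle_dec xn t).
  - pose proof (hopt_exchange_one _ _ _ _ _ _ _ _ _ nil 0 0 l_opt) as Hcost.
    simpl in Hcost. enough (Rabs c * wt t <= 0) by nra.
    apply Hcost. intros i Hi. unfold hinge. rewrite relu_of_nonpos; [ring|].
    pose proof (xs_le i n ltac:(lia) ltac:(lia)) as Hle. fold xn in Hle. lra.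
  - set (gamma := (xn - t) / (xn - xp)).
    assert (Hgamma : 0 < gamma < 1).
    { unfold gamma. split; [apply Rdiv_lt_0_compat; lra|].
      apply (Rmult_lt_reg_r (xn - xp)); [lra|]. field_simplify; lra. }
    pose proof (hopt_exchange_one _ _ _ _ _ _ _ _ _ ((c * gamma, xp) :: nil) 0 0 l_opt) as Hcost.
    assert (Hcheaper : Rabs c * (gamma * wt xp) < Rabs c * wt t).
    { apply Rmult_lt_compat_l; [lra|].
      assert (0 < xp) by (apply xs_pos; lia).
      pose proof (wt_mono xp t ltac:(lra) ltac:(lra)). pose proof (wt_pos xp). nra. }
    enough (Rabs c * wt t <= Rabs c * (gamma * wt xp)) by lra.
    replace (Rabs c * (gamma * wt xp)) with (hcost ((c * gamma, xp) :: nil))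
      by (simpl; rewrite Rabs_mult, (Rabs_pos_eq gamma) by lra; ring).
    apply Hcost. intros i Hi. simpl. unfold hinge.
    destruct (Hdata i Hi) as [->|Hx].
    + fold xn. rewrite !relu_of_nonneg by lra. unfold gamma. field. lra.
    + rewrite !relu_of_nonpos by lra. ring.
Qed.

Lemma hopt_window_exchange j N :
  (1 <= j < n)%nat ->
  let Q := filter (in_window (xs j) (xs (S j))) l in
  (forall x, x <= xs j -> hsum N x = 0) ->
  (forall x, xs (S j) <= x -> hsum N x = hmass Q * x - hmoment Q) ->
  hcost Q <= hcost N.
Proof.
  intros Hj Q Hbelow Habove.
  apply (hopt_exchange_filter _ _ _ _ _ _ _ N 0 0 l_opt). intros i Hi.
  destruct (Nat.le_gt_cases i j).
  - assert (xs i <= xs j) by (apply xs_le; lia).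
    rewrite Hbelow, (hsum_kinks_above Q (xs j)); [ring | | lra | lra].
    intros r Hr. apply In_window in Hr. lra.
  - assert (xs (S j) <= xs i) by (apply xs_le; lia).
    rewrite Habove, (hsum_kinks_below Q (xs (S j))); [ring | | lra | lra].
    intros r Hr. apply In_window in Hr. lra.
Qed.

(* With M, P the mass and moment of the window, the hinges (b M - P) / (b - a) at a and
   (P - a M) / (b - a) at b reproduce it on the data.  If these coefficients had opposite
   signs, their cost would be the value of the dual certificate (b - t) wt a - (t - a) wt b,
   which the interior kink t0 beats strictly. *)
Lemma hopt_window_endpoints_same_sign j c0 t0 :
  (1 <= j < n)%nat -> In (c0, t0) l -> c0 <> 0 -> xs j < t0 < xs (S j) ->
  let Q := filter (in_window (xs j) (xs (S j))) l in
  0 < (xs (S j) * hmass Q - hmoment Q) * (hmoment Q - xs j * hmass Q).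
Proof.
  intros Hj Hin Hc Ht Q.
  assert (Ha : 0 < xs j) by (apply xs_pos; lia).
  assert (Hab : xs j < xs (S j)) by (apply xs_increasing; lia).
  pose proof (fun N => hopt_window_exchange j N Hj) as Hexch. cbv zeta in Hexch. fold Q in Hexch.
  set (a := xs j) in *. set (b := xs (S j)) in *.
  set (A := (b * hmass Q - hmoment Q) / (b - a)). set (B := (hmoment Q - a * hmass Q) / (b - a)).
  apply Rnot_le_lt. intros HAB.
  replace (b * hmass Q - hmoment Q) with ((b - a) * A) in HAB by (unfold A; field; lra).
  replace (hmoment Q - a * hmass Q) with ((b - a) * B) in HAB by (unfold B; field; lra).
  assert (HAB' : A * B <= 0) by (apply (Rmult_le_reg_l ((b - a) * (b - a))); nra).
  assert (Hdual : (b - a) * Rabs (A * wt a - B * wt b) < (b - a) * hcost Q).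
  { replace ((b - a) * Rabs (A * wt a - B * wt b))
      with (Rabs ((b * wt a + a * wt b) * hmass Q + - (wt a + wt b) * hmoment Q)).
    2:{ rewrite <- (Rabs_pos_eq (b - a)), <- Rabs_mult by lra. f_equal. unfold A, B. field. lra. }
    apply (hcost_gt_dual _ _ _ Q c0 t0); [lra | | | auto |].
    - intros c t Hct. apply In_window in Hct. simpl in Hct.
      replace (_ + _ * t) with ((b - t) * wt a - (t - a) * wt b) by ring.
      apply wt_two_point_dual; lra.
    - apply In_window. simpl. split; [auto | lra].
    - replace (_ + _ * t0) with ((b - t0) * wt a - (t0 - a) * wt b) by ring.
      apply wt_two_point_dual_strict; lra. }
  rewrite Rabs_sub_opposite in Hdual by (auto || (left; apply wt_pos)).
  assert (Hcost : hcost Q <= hcost ((A, a) :: (B, b) :: nil)).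
  { apply Hexch.
    - intros x Hx. simpl. unfold hinge. rewrite !relu_of_nonpos by lra. ring.
    - intros x Hx. simpl. unfold hinge. rewrite !relu_of_nonneg by lra.
      unfold A, B. field. lra. }
  simpl in Hcost. nra.
Qed.

(* Hence the barycentre ts = P / M of the window lies in (a, b) and the single hinge M at ts
   reproduces the window on the data; the certificate 1 + ts t, which attains wt ts * wt t
   only at t = ts, then forces every kink of the window to sit at ts. *)
Lemma hopt_gap_single_kink j c0 t0 :
  (1 <= j < n)%nat -> In (c0, t0) l -> c0 <> 0 -> xs j < t0 < xs (S j) ->
  forall c t, In (c, t) l -> c <> 0 -> xs j <= t <= xs (S j) -> t = t0.
Proof.
  intros Hj Hin0 Hc0 Ht0.
  pose proof (hopt_window_endpoints_same_sign j c0 t0 Hj Hin0 Hc0 Ht0) as HAB. cbv zeta in HAB.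
  pose proof (fun N => hopt_window_exchange j N Hj) as Hexch. cbv zeta in Hexch.
  assert (Hab : xs j < xs (S j)) by (apply xs_increasing; lia).
  set (Q := filter (in_window (xs j) (xs (S j))) l) in *.
  set (a := xs j) in *. set (b := xs (S j)) in *.
  set (M := hmass Q) in *. set (P := hmoment Q) in *.
  assert (HM : M <> 0) by (intros HM; rewrite HM in HAB; nra).
  set (ts := P / M).
  assert (HP : P = ts * M) by (unfold ts; field; auto).
  assert (Hts : a < ts < b).
  { rewrite HP in HAB.
    replace ((b * M - ts * M) * (ts * M - a * M)) with ((M * M) * ((b - ts) * (ts - a))) in HAB
      by ring.
    assert (0 < (b - ts) * (ts - a)) by (apply (Rmult_lt_reg_l (M * M)); nra).
    destruct (Rle_dec ts a); [nra|]. destruct (Rle_dec b ts); nra. }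
  assert (Hsingle : forall c t, In (c, t) l -> c <> 0 -> a <= t <= b -> t = ts).
  { intros c t Hin Hc Ht. apply NNPP. intros Hne.
    assert (Hcost : hcost Q <= hcost ((M, ts) :: nil)).
    { apply Hexch.
      - intros x Hx. simpl. unfold hinge. rewrite relu_of_nonpos by lra. ring.
      - intros x Hx. simpl. unfold hinge. rewrite relu_of_nonneg by lra. fold M P. rewrite HP. ring. }
    assert (Hdual : Rabs (1 * M + ts * P) < wt ts * hcost Q).
    { apply (hcost_gt_dual _ _ _ Q c t); [left; apply wt_pos | | | auto |].
      - intros c' t' _. apply wt_cauchy_schwarz.
      - apply In_window. simpl. auto.
      - apply wt_cauchy_schwarz_strict. auto. }
    replace (1 * M + ts * P) with (M * (wt ts * wt ts)) in Hdual by (rewrite HP, wt_sq; ring).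
    rewrite Rabs_mult, (Rabs_pos_eq (wt ts * wt ts)) in Hdual by (pose proof (wt_pos ts); nra).
    simpl in Hcost. pose proof (wt_pos ts). nra. }
  intros c t Hin Hc Ht.
  rewrite (Hsingle c t Hin Hc Ht). symmetry. apply (Hsingle c0 t0 Hin0 Hc0). lra.
Qed.

Lemma hopt_adjacent_jumps k t1 t2 :
  (1 <= k)%nat -> (S (S k) <= n)%nat ->
  xs k < t1 < xs (S k) -> xs (S k) < t2 < xs (S (S k)) ->
  (forall c t, In (c, t) l -> c <> 0 -> xs k <= t <= xs (S (S k)) -> t = t1 \/ t = t2) ->
  0 <= slope_jump t1 l * slope_jump t2 l.
Proof.
  intros Hk Hkn Ht1 Ht2 Hkinks.
  assert (Ha : 0 < xs k) by (apply xs_pos; lia).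
  set (a := xs k) in *. set (m := xs (S k)) in *. set (b := xs (S (S k))) in *.
  set (Q := filter (in_window a b) l).
  rewrite <- (slope_jump_window a b t1), <- (slope_jump_window a b t2) by lra. fold Q.
  destruct (hsum_two_kinks Q t1 t2) as [HQ HcostQ]; [lra| |].
  { intros c t Hin Hc. apply In_window in Hin as [Hin Ht]. apply (Hkinks c); auto. }
  apply Rnot_lt_le. intros Hopp.
  destruct (two_hinges_shrink a t1 m t2 b _ _ Ha ltac:(lra) ltac:(lra) Hopp)
    as (N & HcostN & HN).
  enough (hcost Q <= hcost N) by lra.
  apply (hopt_exchange_filter _ _ _ _ _ _ _ N 0 0 l_opt). intros i Hi.
  fold Q. rewrite HQ, HN; [ring|].
  destruct (Nat.le_gt_cases i k); [left; apply xs_le; lia|].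
  destruct (Nat.eq_dec i (S k)) as [->|]; [right; left; reflexivity|].
  right; right. apply xs_le; lia.
Qed.

Lemma hopt_left_neighbour k c0 t0 :
  (1 <= k)%nat -> (S (S k) <= n)%nat ->
  In (c0, t0) l -> c0 <> 0 -> xs (S k) < t0 < xs (S (S k)) ->
  exists t1, xs k < t1 <= xs (S k) /\ 0 <= slope_jump t1 l * slope_jump t0 l /\
    forall c t, In (c, t) l -> c <> 0 -> xs k < t <= xs (S k) -> t = t1.
Proof.
  intros Hk Hkn Hin0 Hc0 Ht0.
  pose proof (hopt_gap_single_kink (S k) c0 t0 ltac:(lia) Hin0 Hc0 Ht0) as Hgap0.
  assert (xs k < xs (S k)) by (apply xs_increasing; lia).
  destruct (classic (exists c1 t1, In (c1, t1) l /\ c1 <> 0 /\ xs k < t1 < xs (S k)))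
    as [(c1 & t1 & Hin1 & Hc1 & Ht1)|Hnone].
  - pose proof (hopt_gap_single_kink k c1 t1 ltac:(lia) Hin1 Hc1 Ht1) as Hgap1.
    exists t1. split; [lra|]. split.
    + apply (hopt_adjacent_jumps k); auto. intros c t Hin Hc Ht.
      destruct (Rle_dec t (xs (S k))).
      * left. apply (Hgap1 c); auto; lra.
      * right. apply (Hgap0 c); auto; lra.
    + intros c t Hin Hc Ht. apply (Hgap1 c); auto; lra.
  - exists (xs (S k)). split; [lra|].
    assert (Hflat : forall c, In (c, xs (S k)) l -> c = 0).
    { intros c Hin. apply NNPP. intros Hc.
      pose proof (Hgap0 c (xs (S k)) Hin Hc ltac:(lra)). lra. }
    rewrite (slope_jump_inactive _ _ Hflat). split; [lra|].
    intros c t Hin Hc Ht. destruct (Req_dec t (xs (S k))) as [|Hne]; [auto|].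
    exfalso. apply Hnone. exists c, t. repeat split; auto; lra.
Qed.

Lemma hopt_right_neighbour k c0 t0 :
  (1 <= k)%nat -> (S (S (S k)) <= n)%nat ->
  In (c0, t0) l -> c0 <> 0 -> xs (S k) < t0 < xs (S (S k)) ->
  exists t2, xs (S (S k)) <= t2 < xs (S (S (S k))) /\ 0 <= slope_jump t2 l * slope_jump t0 l /\
    forall c t, In (c, t) l -> c <> 0 -> xs (S (S k)) <= t < xs (S (S (S k))) -> t = t2.
Proof.
  intros Hk Hkn Hin0 Hc0 Ht0.
  pose proof (hopt_gap_single_kink (S k) c0 t0 ltac:(lia) Hin0 Hc0 Ht0) as Hgap0.
  assert (xs (S (S k)) < xs (S (S (S k)))) by (apply xs_increasing; lia).
  destruct (classic (exists c2 t2, In (c2, t2) l /\ c2 <> 0 /\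
                                   xs (S (S k)) < t2 < xs (S (S (S k)))))
    as [(c2 & t2 & Hin2 & Hc2 & Ht2)|Hnone].
  - pose proof (hopt_gap_single_kink (S (S k)) c2 t2 ltac:(lia) Hin2 Hc2 Ht2) as Hgap2.
    exists t2. split; [lra|]. split.
    + rewrite Rmult_comm. apply (hopt_adjacent_jumps (S k)); [lia | lia | lra | lra |].
      intros c t Hin Hc Ht.
      destruct (Rle_dec t (xs (S (S k)))).
      * left. apply (Hgap0 c); auto; lra.
      * right. apply (Hgap2 c); auto; lra.
    + intros c t Hin Hc Ht. apply (Hgap2 c); auto; lra.
  - exists (xs (S (S k))). split; [lra|].
    assert (Hflat : forall c, In (c, xs (S (S k))) l -> c = 0).
    { intros c Hin. apply NNPP. intros Hc.
      pose proof (Hgap0 c (xs (S (S k))) Hin Hc ltac:(lra)). lra. }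
    rewrite (slope_jump_inactive _ _ Hflat). split; [lra|].
    intros c t Hin Hc Ht. destruct (Req_dec t (xs (S (S k)))) as [|Hne]; [auto|].
    exfalso. apply Hnone. exists c, t. repeat split; auto; lra.
Qed.

Lemma hopt_interior_chord_gaps k x :
  (1 <= k)%nat -> (S (S (S k)) <= n)%nat -> xs (S k) <= x <= xs (S (S k)) ->
  let F := hnet l al be in
  chord_gap F (xs (S k)) (xs (S (S k))) x * chord_gap F (xs k) (xs (S k)) x <= 0 /\
  chord_gap F (xs (S k)) (xs (S (S k))) x * chord_gap F (xs (S (S k))) (xs (S (S (S k)))) x <= 0.
Proof.
  intros Hk Hkn Hx F.
  assert (xs k < xs (S k)) by (apply xs_increasing; lia).
  assert (xs (S k) < xs (S (S k))) by (apply xs_increasing; lia).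
  assert (xs (S (S k)) < xs (S (S (S k)))) by (apply xs_increasing; lia).
  destruct (classic (exists c0 t0, In (c0, t0) l /\ c0 <> 0 /\ xs (S k) < t0 < xs (S (S k))))
    as [(c0 & t0 & Hin0 & Hc0 & Ht0)|Hnone].
  - pose proof (hopt_gap_single_kink (S k) c0 t0 ltac:(lia) Hin0 Hc0 Ht0) as Hgap0.
    destruct (hopt_left_neighbour k c0 t0) as (t1 & Ht1 & HJ1 & Hleft); auto; [lia|].
    destruct (hopt_right_neighbour k c0 t0) as (t2 & Ht2 & HJ2 & Hright); auto.
    destruct (hsum_three_kinks l (xs k) (xs (S (S (S k)))) t1 t0 t2) as (al' & be' & Hrep);
      [lra | lra | lra | |].
    { intros c t Hin Hc Ht.
      destruct (Rle_dec t (xs (S k))); [left; apply (Hleft c); auto; lra|].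
      destruct (Rlt_dec t (xs (S (S k)))); [right; left; apply (Hgap0 c); auto; lra|].
      right; right. apply (Hright c); auto; lra. }
    set (h := hnet ((slope_jump t1 l, t1) :: (slope_jump t0 l, t0) :: (slope_jump t2 l, t2) :: nil)
                   (al' + al) (be' + be)).
    assert (HFh : forall y, xs k <= y <= xs (S (S (S k))) -> F y = h y).
    { intros y Hy. unfold F, h, hnet at 1. rewrite Hrep by auto. unfold hnet. simpl. ring. }
    rewrite !(chord_gap_ext F h) by (apply HFh; lra).
    apply three_hinges_chord_gaps; lra.
  - destruct (hsum_affine_on l (xs (S k)) (xs (S (S k)))) as (al' & be' & Haff).
    { intros c t Hin Hc. destruct (Rle_dec t (xs (S k))); [left; auto|].
      right. apply Rnot_lt_le. intros Ht. apply Hnone. exists c, t. repeat split; auto; lra. }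
    rewrite (chord_gap_affine F (al' + al) (be' + be)); [lra | ..];
      unfold F, hnet; rewrite Haff by lra; ring.
Qed.

Lemma hopt_interior_gseg k x :
  (1 <= k)%nat -> (S (S (S k)) <= n)%nat -> xs (S k) <= x <= xs (S (S k)) ->
  let F := hnet l al be in
  (F x - gseg xs ys (S k) x) * (F x - gseg xs ys k x) <= 0 /\
  (F x - gseg xs ys (S k) x) * (F x - gseg xs ys (S (S k)) x) <= 0.
Proof.
  intros Hk Hkn Hx F.
  destruct (hopt_interior_chord_gaps k x Hk Hkn Hx) as [Hleft Hright]. fold F in Hleft, Hright.
  assert (Hint : forall i, (k <= i <= S (S (S k)))%nat -> F (xs i) = ys i)
    by (intros; apply (proj1 l_opt); lia).
  assert (H0 : xs k < xs (S k)) by (apply xs_increasing; lia).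
  assert (H1 : xs (S k) < xs (S (S k))) by (apply xs_increasing; lia).
  assert (H2 : xs (S (S k)) < xs (S (S (S k)))) by (apply xs_increasing; lia).
  rewrite !(chord_gap_gseg F xs ys) in Hleft, Hright by (auto || (apply Hint; lia)).
  split; [apply (Rmult_le_reg_l ((xs (S (S k)) - xs (S k)) * (xs (S k) - xs k)))
         |apply (Rmult_le_reg_l ((xs (S (S k)) - xs (S k)) * (xs (S (S (S k))) - xs (S (S k)))))];
    nra.
Qed.

Lemma hopt_gseg_first x :
  (2 <= n)%nat -> x <= xs 2%nat -> hnet l al be x = gseg xs ys 1 x.
Proof.
  intros Hn Hx.
  destruct (hsum_affine_on l (Rmin x (xs 1%nat)) (xs 2%nat)) as (al' & be' & Haff).
  { intros c t Hin Hc. right. apply (hopt_kink_ge_x2 c); auto. }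
  assert (xs 1%nat < xs 2%nat) by (apply xs_increasing; lia).
  pose proof (Rmin_l x (xs 1%nat)). pose proof (Rmin_r x (xs 1%nat)).
  apply (gseg_of_affine_on _ (al' + al) (be' + be) (Rmin x (xs 1%nat)) (xs 2%nat));
    try lra; try (apply (proj1 l_opt); lia).
  intros y Hy. unfold hnet. rewrite Haff by auto. ring.
Qed.

Lemma hopt_gseg_last x :
  (2 <= n)%nat -> xs (n - 1)%nat <= x -> hnet l al be x = gseg xs ys (n - 1) x.
Proof.
  intros Hn Hx.
  destruct (hsum_affine_on l (xs (n - 1)%nat) (Rmax x (xs n))) as (al' & be' & Haff).
  { intros c t Hin Hc. left. apply (hopt_kink_le_xpred c); auto. }
  assert (HSn : S (n - 1) = n) by lia.
  assert (xs (n - 1)%nat < xs (S (n - 1))) by (apply xs_increasing; lia).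
  pose proof (Rmax_l x (xs n)). pose proof (Rmax_r x (xs n)).
  apply (gseg_of_affine_on _ (al' + al) (be' + be) (xs (n - 1)%nat) (Rmax x (xs n)));
    rewrite ?HSn in *; try lra; try (apply (proj1 l_opt); lia).
  intros y Hy. unfold hnet. rewrite Haff by auto. ring.
Qed.

End OptimalInterpolant.

Lemma Rabs_le_max_min v A B C t :
  (v - A) * (v - B) <= 0 -> (v - A) * (v - C) <= 0 ->
  Rabs (v - t) <= Rmax (Rabs (A - t)) (Rmin (Rabs (B - t)) (Rabs (C - t))).
Proof.
  intros HB HC.
  assert (Hfar : forall D, 0 <= (D - v) * (v - t) -> Rabs (v - t) <= Rabs (D - t)).
  { intros D HD. apply Rsqr_le_abs_0. unfold Rsqr.
    replace (D - t) with ((D - v) + (v - t)) by ring.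
    pose proof (Rle_0_sqr (D - v)). unfold Rsqr in *. nra. }
  destruct (Rle_dec 0 ((A - v) * (v - t))) as [HA|HA].
  - eapply Rle_trans; [apply Hfar, HA | apply Rmax_l].
  - assert (0 < (A - v) * (A - v)) by (assert (A - v <> 0) by (intros E; rewrite E in HA; lra); nra).
    eapply Rle_trans; [|apply Rmax_r]. apply Rmin_glb; apply Hfar.
    + apply (Rmult_le_reg_l ((A - v) * (A - v))); nra.
    + apply (Rmult_le_reg_l ((A - v) * (A - v))); nra.
Qed.

Theorem lemma8 (fstar : R -> R) (n : nat) (xs ys : nat -> R)
  (th : neurons) (a0 b0 : R) :
  (2 <= n)%nat ->
  0 < xs 1%nat ->
  (forall i : nat, (1 <= i < n)%nat -> xs i < xs (S i)) ->
  xs n < 1 ->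
  min_norm_interpolant n xs ys th a0 b0 ->
  (forall (i : nat) (x : R), (2 <= i <= n - 2)%nat -> xs i <= x < xs (S i) ->
     Rabs (net th a0 b0 x - fstar x) <=
     Rmax (Rabs (gseg xs ys i x - fstar x))
          (Rmin (Rabs (gseg xs ys (S i) x - fstar x))
                (Rabs (gseg xs ys (i - 1) x - fstar x)))) /\
  (forall x : R, 0 <= x < xs 2%nat ->
     Rabs (net th a0 b0 x - fstar x) = Rabs (gseg xs ys 1 x - fstar x)) /\
  (forall x : R, xs (n - 1)%nat <= x <= 1 ->
     Rabs (net th a0 b0 x - fstar x) = Rabs (gseg xs ys (n - 1) x - fstar x)).
Proof.
  intros Hn Hx1 Hinc _ Hmin.
  pose proof (min_norm_interpolant_hopt _ _ _ _ _ _ Hmin) as Hopt.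
  split; [|split].
  - intros i x Hi Hx. destruct i as [|k]; [lia|]. replace (S k - 1)%nat with k by lia.
    destruct (hopt_interior_gseg n xs ys Hinc Hx1 _ _ _ Hopt k x) as [HB HC]; [lia | lia | lra |].
    rewrite net_hinges_of. apply Rabs_le_max_min; auto.
  - intros x Hx. rewrite net_hinges_of, (hopt_gseg_first n xs ys Hinc Hx1 _ _ _ Hopt); auto; lra.
  - intros x Hx. rewrite net_hinges_of, (hopt_gseg_last n xs ys Hinc Hx1 _ _ _ Hopt); auto; lra.
Qed.
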